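(* Let $(A,B)$ be a finite-dimensional odd-symmetric associative superalgebra over an algebraically closed field $\mathbb{K}$ of characteristic zero. Then $A_{\bar 1}$ is a semi-simple $A_{\bar 0}$-bimodule if and only if $A_{\bar 0}$ is a semi-simple $A_{\bar 0}$-bimodule.
   Context: A superalgebra is $\mathbb{Z}_2$-graded, $A=A_{\bar 0}\oplus A_{\bar 1}$, $A_\alpha A_\beta\subseteq A_{\alpha+\beta}$. An odd-symmetric structure on $A$ is a bilinear form $B$ with $B(A_{\bar 0},A_{\bar 0})=B(A_{\bar 1},A_{\bar 1})=0$ which is supersymmetric ($B(x,y)=(-1)^{|x||y|}B(y,x)$), associative ($B(xy,z)=B(x,yz)$) and non-degenerate. $A_{\bar 0}$ and $A_{\bar 1}$ are $A_{\bar 0}$-bimodules via left and right multiplication; an $A_{\bar 0}$-bimodule is semi-simple if every sub-bimodule admits a complementary sub-bimodule. *)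

From HB Require Import structures.
From mathcomp Require Import all_boot all_order all_algebra.
Set Implicit Arguments. Unset Strict Implicit. Unset Printing Implicit Defensive.
Import GRing.Theory.
Local Open Scope ring_scope.

(* A finite-dimensional superalgebra is modelled as a finite-dimensional
   K-vector space V (a vectType) with a bilinear product [mul] and two
   subspaces A0, A1 with V = A0 (+) A1 (direct sum). *)

Section SuperAlg.
Variables (K : fieldType) (V : vectType K).

Definition bilinear_mul (mul : V -> V -> V) : Prop :=
  (forall (a : K) (x y z : V), mul (a *: x + y) z = a *: mul x z + mul y z) /\
  (forall (a : K) (x y z : V), mul z (a *: x + y) = a *: mul z x + mul z y).

Definition bilinear_form (B : V -> V -> K) : Prop :=
  (forall (a : K) (x y z : V), B (a *: x + y) z = a * B x z + B y z) /\
  (forall (a : K) (x y z : V), B z (a *: x + y) = a * B z x + B z y).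

Definition is_assoc_superalgebra (mul : V -> V -> V) (A0 A1 : {vspace V}) : Prop :=
  bilinear_mul mul /\
  (A0 + A1)%VS = fullv /\ directv (A0 + A1)%VS /\
  (forall x y, x \in A0 -> y \in A0 -> mul x y \in A0) /\
  (forall x y, x \in A0 -> y \in A1 -> mul x y \in A1) /\
  (forall x y, x \in A1 -> y \in A0 -> mul x y \in A1) /\
  (forall x y, x \in A1 -> y \in A1 -> mul x y \in A0) /\
  (forall x y z, mul (mul x y) z = mul x (mul y z)).

Definition odd_symmetric (mul : V -> V -> V) (A0 A1 : {vspace V})
    (B : V -> V -> K) : Prop :=
  bilinear_form B /\
  (forall x y, x \in A0 -> y \in A0 -> B x y = 0) /\
  (forall x y, x \in A1 -> y \in A1 -> B x y = 0) /\
      (* supersymmetry on homogeneous elements: sign (-1)^{|x||y|} *)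
  (forall x y, x \in A0 -> y \in A0 -> B x y = B y x) /\
  (forall x y, x \in A0 -> y \in A1 -> B x y = B y x) /\
  (forall x y, x \in A1 -> y \in A0 -> B x y = B y x) /\
  (forall x y, x \in A1 -> y \in A1 -> B x y = - B y x) /\
  (forall x y z, B (mul x y) z = B x (mul y z)) /\
  (forall x, (forall y, B x y = 0) -> x = 0).

Definition sub_bimodule (mul : V -> V -> V) (A0 M U : {vspace V}) : Prop :=
  (U <= M)%VS /\
  (forall a u, a \in A0 -> u \in U -> mul a u \in U /\ mul u a \in U).

Definition semisimple_bimodule (mul : V -> V -> V) (A0 M : {vspace V}) : Prop :=
  forall U, sub_bimodule mul A0 M U ->
    exists W, [/\ sub_bimodule mul A0 M W, (U + W)%VS = M & (U :&: W)%VS = 0%VS].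

End SuperAlg.

From HB Require Import structures.
From mathcomp Require Import all_boot all_order all_algebra.
From mathcomp Require Import zify.
Set Implicit Arguments. Unset Strict Implicit. Unset Printing Implicit Defensive.
Import GRing.Theory.
Local Open Scope ring_scope.

(* Since B vanishes on A0 x A0 and on A1 x A1, it restricts to a
   non-degenerate pairing between A0 and A1, so dim A0 = dim A1.  Invariance
   B(xy, z) = B(x, yz) and supersymmetry make the left (right) A0-action on
   A1 adjoint to the right (left) A0-action on A0, hence the annihilator of a
   sub-bimodule of one side is a sub-bimodule of the other.  Annihilating a
   complement of the annihilator of U then gives a complement of U, the
   dimensions matching by non-degeneracy. *)

Section Pairing.
Variables (K : fieldType) (V : vectType K).
Implicit Types (pr : V -> V -> K) (M P Q S U W : {vspace V}).

Definition transpose_form pr : V -> V -> K := fun x y => pr y x.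

Definition left_nondegenerate pr P Q : Prop :=
  forall x, x \in P -> (forall y, y \in Q -> pr x y = 0) -> x = 0.

Definition bimodule_closed (mul : V -> V -> V) (A0 : {vspace V}) M : Prop :=
  forall a m, a \in A0 -> m \in M -> mul a m \in M /\ mul m a \in M.

Definition balanced_pairing (mul : V -> V -> V) (A0 : {vspace V}) P Q pr : Prop :=
  [/\ left_nondegenerate pr P Q,
      left_nondegenerate (transpose_form pr) Q P &
      forall a x y, a \in A0 -> x \in P -> y \in Q ->
        pr x (mul a y) = pr (mul x a) y /\ pr x (mul y a) = pr (mul a x) y].

Lemma bilinear_form_transpose pr :
  bilinear_form pr -> bilinear_form (transpose_form pr).
Proof. by case. Qed.

Lemma balanced_pairing_transpose mul (A0 : {vspace V}) P Q pr :
  balanced_pairing mul A0 P Q pr -> balanced_pairing mul A0 Q P (transpose_form pr).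
Proof.
case=> ndP ndQ adj; split => //.
move=> a y x aA yQ xP; have [ayx yax] := adj a x y aA xP yQ.
by rewrite /transpose_form ayx yax.
Qed.

Section Annihilator.
Context {pr : V -> V -> K} (pr_bilinear : bilinear_form pr).

Lemma form0l z : pr 0 z = 0.
Proof.
have := pr_bilinear.1 1 0 0 z; rewrite scaler0 addr0 mul1r => h.
by apply: (addrI (pr 0 z)); rewrite addr0 -h.
Qed.

Lemma formDl x y z : pr (x + y) z = pr x z + pr y z.
Proof. by have := pr_bilinear.1 1 x y z; rewrite scale1r mul1r. Qed.

Lemma formDr x y z : pr z (x + y) = pr z x + pr z y.
Proof. by have := pr_bilinear.2 1 x y z; rewrite scale1r mul1r. Qed.

Lemma formZl a x z : pr (a *: x) z = a * pr x z.
Proof. by rewrite -[a *: x]addr0 pr_bilinear.1 form0l addr0. Qed.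

Lemma form_suml I (r : seq I) (P : pred I) (F : I -> V) z :
  pr (\sum_(i <- r | P i) F i) z = \sum_(i <- r | P i) pr (F i) z.
Proof. by elim/big_rec2: _ => [|i y1 y2 _ <-]; rewrite ?form0l ?formDl. Qed.

(* Orthogonality to [S] is tested on its basis, so the annihilator is the
   kernel of a linear map to rows. *)
Definition basis_pairing S (y : V) : 'rV[K]_(\dim S) :=
  \row_i pr (vbasis S)`_i y.

Lemma basis_pairing_is_linear S : linear (basis_pairing S).
Proof. by move=> a x y; apply/rowP => i; rewrite !mxE pr_bilinear.2. Qed.

HB.instance Definition _ S :=
  GRing.isLinear.Build K V _ _ (basis_pairing S) (basis_pairing_is_linear S).

Definition ann Q S : {vspace V} := (Q :&: lker (linfun (basis_pairing S)))%VS.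

Lemma annP Q S y :
  reflect (y \in Q /\ forall s, s \in S -> pr s y = 0) (y \in ann Q S).
Proof.
rewrite memv_cap memv_ker lfunE /=.
apply: (iffP andP) => [[yQ /eqP/rowP orth] | [yQ orth]]; split => //.
  move=> s /coord_vbasis ->; rewrite form_suml big1 // => i _.
  by rewrite formZl; have := orth i; rewrite !mxE => ->; rewrite mulr0.
apply/eqP/rowP => i; rewrite !mxE; apply: orth.
by apply: vbasis_mem; apply: mem_nth; rewrite size_tuple.
Qed.

Lemma ann_sub Q S : (ann Q S <= Q)%VS.
Proof. exact: capvSl. Qed.

Lemma dim_ann Q S : (\dim Q <= \dim (ann Q S) + \dim S)%N.
Proof.
rewrite -(limg_ker_dim (linfun (basis_pairing S)) Q) leq_add2l.
by apply: leq_trans (dimvS (subvf _)) _; rewrite dimvf /dim /= mul1n.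
Qed.

End Annihilator.

Arguments ann : clear implicits.
Arguments dim_ann : clear implicits.

Lemma subv0P U : (forall y, y \in U -> y = 0) -> U = 0%VS.
Proof.
by move=> U0; apply/eqP; rewrite -subv0; apply/subvP => y /U0 ->; rewrite mem0v.
Qed.

Lemma addv_complement_dim Q U W :
  (U <= Q)%VS -> (W <= Q)%VS -> (U :&: W = 0)%VS ->
  (\dim Q <= \dim U + \dim W)%N -> (U + W)%VS = Q.
Proof.
move=> UQ WQ capUW dimQ; apply/eqP; rewrite eqEdim subv_add UQ WQ /=.
by rewrite dimv_disjoint_sum.
Qed.

Lemma dim_le_nondegenerate pr P Q :
  bilinear_form pr -> left_nondegenerate (transpose_form pr) Q P ->
  (\dim Q <= \dim P)%N.
Proof.
move=> bil ndQ; have := dim_ann pr Q P.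
suff -> : ann pr Q P = 0%VS by rewrite dimv0.
by apply: subv0P => y /(annP bil) [yQ orth]; apply: ndQ.
Qed.

Lemma dim_nondegenerate pr P Q :
  bilinear_form pr -> left_nondegenerate pr P Q ->
  left_nondegenerate (transpose_form pr) Q P -> \dim P = \dim Q.
Proof.
move=> bil ndP ndQ; apply/eqP; rewrite eqn_leq (dim_le_nondegenerate bil ndQ) andbT.
exact: dim_le_nondegenerate (bilinear_form_transpose bil) ndP.
Qed.

Variables (mul : V -> V -> V) (A0 : {vspace V}).

Lemma ann_sub_bimodule pr P Q S :
  bilinear_form pr -> balanced_pairing mul A0 P Q pr -> bimodule_closed mul A0 Q ->
  sub_bimodule mul A0 P S -> sub_bimodule mul A0 Q (ann pr Q S).
Proof.
move=> bil [_ _ adj] clQ [SP clS]; split; first exact: ann_sub.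
move=> a y aA /(annP bil) [yQ orth]; have [ayQ yaQ] := clQ a y aA yQ.
split; apply/(annP bil); split => // s sS; have [asS saS] := clS a s aA sS.
  by have [-> _] := adj a s y aA (subvP SP s sS) yQ; apply: orth.
by have [_ ->] := adj a s y aA (subvP SP s sS) yQ; apply: orth.
Qed.

Lemma semisimple_bimodule_transfer pr P Q :
  bilinear_form pr -> balanced_pairing mul A0 P Q pr ->
  bimodule_closed mul A0 P -> bimodule_closed mul A0 Q ->
  semisimple_bimodule mul A0 P -> semisimple_bimodule mul A0 Q.
Proof.
move=> bil hpr clP clQ ssP U Ubi; have [ndP ndQ _] := hpr.
have bilT := bilinear_form_transpose bil.
have U'bi := ann_sub_bimodule bilT (balanced_pairing_transpose hpr) clP Ubi.
have [W [Wbi sumW capW]] := ssP _ U'bi.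
have capUW : (U :&: ann pr Q W = 0)%VS.
  apply: subv0P => y /memv_capP [yU /(annP bil) [yQ orthW]].
  apply: ndQ yQ _ => x; rewrite -sumW => /memv_addP [u uU' [w wW ->]].
  rewrite /transpose_form (formDl bil) (orthW w wW) addr0.
  by case/(annP bilT): uU' => _ /(_ y yU).
exists (ann pr Q W); split=> //; first exact: ann_sub_bimodule bil hpr clQ Wbi.
apply: addv_complement_dim => //; [exact: Ubi.1 | exact: ann_sub |].
have := dim_ann (transpose_form pr) P U; have := dim_ann pr Q W.
have := dimv_disjoint_sum capW; rewrite sumW (dim_nondegenerate bil ndP ndQ).
lia.
Qed.

End Pairing.

Section OddSymmetric.
Variables (K : fieldType) (V : vectType K) (mul : V -> V -> V).
Variables (A0 A1 : {vspace V}) (B : V -> V -> K).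
Hypothesis superalg : is_assoc_superalgebra mul A0 A1.
Hypothesis oddsym : odd_symmetric mul A0 A1 B.

Lemma superalgebra_bimodule_closed :
  bimodule_closed mul A0 A0 /\ bimodule_closed mul A0 A1.
Proof.
have [_ [_ [_ [c00 [c01 [c10 _]]]]]] := superalg.
by split=> a x aA xA; split; [apply: c00 | apply: c00 | apply: c01 | apply: c10].
Qed.

Lemma odd_symmetric_balanced : balanced_pairing mul A0 A0 A1 B.
Proof.
have [_ [sumA [_ [c00 [_ [c10 _]]]]]] := superalg.
have [bil [B00 [B11 [_ [s01 [s10 [_ [Bassoc nd]]]]]]]] := oddsym.
have dec v : exists2 v0, v0 \in A0 & exists2 v1, v1 \in A1 & v = v0 + v1.
  by apply/memv_addP; rewrite sumA memvf.
split.
- move=> x xA orth; apply: nd => v; have [v0 v0A [v1 v1A ->]] := dec v.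
  by rewrite (formDr bil) B00 // orth // addr0.
- move=> y yA orth; apply: nd => v; have [v0 v0A [v1 v1A ->]] := dec v.
  by rewrite (formDr bil) (B11 y v1) // s10 // addr0; apply: orth.
- move=> a x y aA xA yA; split; first by rewrite Bassoc.
  by rewrite (s01 x) ?c10 // Bassoc (s10 y) ?c00.
Qed.

End OddSymmetric.

Theorem mainTheorem11 (K : closedFieldType) (V : vectType K)
    (mul : V -> V -> V) (A0 A1 : {vspace V}) (B : V -> V -> K) :
  [pchar K] =i pred0 ->
  is_assoc_superalgebra mul A0 A1 ->
  odd_symmetric mul A0 A1 B ->
  (semisimple_bimodule mul A0 A1 <-> semisimple_bimodule mul A0 A0).
Proof.
move=> _ superalg oddsym; have bil := oddsym.1.
have hpr := odd_symmetric_balanced superalg oddsym.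
have [cl0 cl1] := superalgebra_bimodule_closed superalg.
split; first exact: semisimple_bimodule_transfer
  (bilinear_form_transpose bil) (balanced_pairing_transpose hpr) cl1 cl0.
exact: semisimple_bimodule_transfer bil hpr cl0 cl1.
Qed.
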